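(* Let $\widetilde{\Sigma}=\widetilde{\Sigma}_1\uplus\cdots\uplus\widetilde{\Sigma}_n$ with pairwise disjoint visibly pushdown alphabets $\widetilde{\Sigma}_i$. If $\prec$ is a visibly pushdown contextual order on $\widetilde{\Sigma}$ and $P_1\subseteq\widetilde{\Sigma}_1^*,\ldots,P_n\subseteq\widetilde{\Sigma}_n^*$ are well-matched visibly pushdown languages, then $\mathrm{red}_\prec(P_1\bowtie\cdots\bowtie P_n)$ is a visibly pushdown language.
   Context: A visibly pushdown (VP) alphabet is a finite alphabet partitioned into calls, returns and internals; $\widetilde{\Sigma}$ has as calls/returns/internals the unions. Calls and returns in a word are matched like opening and closing parentheses (internals ignored); unmatched ones are pending; a word is well-matched if none are pending. A visibly pushdown automaton (VPA) is a pushdown automaton with bottom symbol $\bot$ that pushes one non-$\bot$ symbol on each call, pops the top on each return (reading $\bot$ on empty stack without removing it), and leaves the stack unchanged on internals; visibly pushdown languages are those accepted by VPAs; deterministic = one initial state and at most one transition per configuration and letter; complete = at least one. Shuffle: $P_1\parallel\cdots\parallel P_n=\{w\in\widetilde{\Sigma}^*:\Pi_{\widetilde{\Sigma}_i}(w)\in P_i\ \forall i\}$, $\Pi_{\widetilde{\Sigma}_i}$ erasing letters outside $\widetilde{\Sigma}_i$. A word is well-nested if every matched call–return pair consists of letters from the same $\widetilde{\Sigma}_k$; $P_1\bowtie\cdots\bowtie P_n$ is the set of well-nested words of $P_1\parallel\cdots\parallel P_n$. $\mathbb{I}=\{(a,b):a\in\widetilde{\Sigma}_i,b\in\widetilde{\Sigma}_j,i\ne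 j\}$, $\equiv_{\mathbb{I}}$ the least reflexive transitive relation with $uabv\equiv_{\mathbb{I}}ubav$ for $(a,b)\in\mathbb{I}$. A contextual order is a map $\prec$ from $\widetilde{\Sigma}^*$ to strict total orders on $\widetilde{\Sigma}$; it induces $\preceq$: $\sigma\preceq\rho$ iff $\sigma$ is a prefix of $\rho$ or $\sigma=\alpha a\beta$, $\rho=\alpha b\gamma$ with $a\prec_\alpha b$. $\mathrm{red}_\prec(L)=\{w\in L:\forall u\in L,(u\equiv_{\mathbb{I}}w\wedge u\preceq w)\Rightarrow u=w\}$. $\prec$ is visibly pushdown if there is a complete deterministic VPA $A$ over $\widetilde{\Sigma}$ and a map $\mathsf{ord}$ from its states to strict total orders on $\widetilde{\Sigma}$ with $\prec_w=\mathsf{ord}(q)$, $q$ the state reached by $A$ after reading $w$. *)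

From mathcomp Require Import all_boot.
From Stdlib Require Import Relations.

Set Implicit Arguments.
Unset Strict Implicit.
Unset Printing Implicit Defensive.

Inductive vkind := Call | Ret | Int.

Section VP.
Variable Sigma : finType.
Variable kind : Sigma -> vkind.

Fixpoint bal_aux (d : nat) (w : seq Sigma) : bool :=
  match w with
  | [::] => d == 0
  | a :: w' =>
      match kind a with
      | Call => bal_aux d.+1 w'
      | Ret => if d is d'.+1 then bal_aux d' w' else false
      | Int => bal_aux d w'
      end
  end.

Definition balanced (w : seq Sigma) : bool := bal_aux 0 w.

(* A call occurrence a and a return occurrence b in w = u a v b y are matched
   iff a is a call, b is a return, and the infix v strictly between them is
   balanced (i.e. matched like parentheses, internals ignored). *)

Definition well_matched (w : seq Sigma) : Prop :=
  forall u a x, w = u ++ a :: x ->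
    (kind a = Call -> exists v b y, x = v ++ b :: y /\ kind b = Ret /\ balanced v) /\
    (kind a = Ret -> exists y c v, u = y ++ c :: v /\ kind c = Call /\ balanced v).

(* Stack symbols are drawn from gam (non-bottom symbols); the bottom symbol is
   represented by [None] / the empty stack. *)
Record vpa := VPA {
  vst : finType;
  vgam : finType;
  vinit : pred vst;
  vfinal : pred vst;
  dcall : vst -> Sigma -> vst -> vgam -> bool;
  dret : vst -> Sigma -> option vgam -> vst -> bool; (* None = reading bottom *)
  dint : vst -> Sigma -> vst -> bool
}.

Arguments vinit : clear implicits.
Arguments vfinal : clear implicits.

Definition config (A : vpa) := (vst A * seq (vgam A))%type.

(* one step of A on a letter (stack top is the head of the list) *)
Inductive vstep (A : vpa) : config A -> Sigma -> config A -> Prop :=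
| StepCall q a q' g s :
    kind a = Call -> dcall q a q' g -> vstep (q, s) a (q', g :: s)
| StepRet q a q' g s :
    kind a = Ret -> dret q a (Some g) q' -> vstep (q, g :: s) a (q', s)
| StepRetBot q a q' :
    kind a = Ret -> dret q a None q' -> vstep (q, [::]) a (q', [::])
| StepInt q a q' s :
    kind a = Int -> dint q a q' -> vstep (q, s) a (q', s).

Inductive vrun (A : vpa) : config A -> seq Sigma -> config A -> Prop :=
| RunNil c : vrun c [::] c
| RunCons c a c' w c'' : vstep c a c' -> vrun c' w c'' -> vrun c (a :: w) c''.

Definition vaccepts (A : vpa) (w : seq Sigma) : Prop :=
  exists q0 c, vinit A q0 /\ vrun (q0, [::]) w c /\ vfinal A c.1.

Definition is_vpl (L : seq Sigma -> Prop) : Prop :=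
  exists A : vpa, forall w, L w <-> vaccepts A w.

Definition vdeterministic (A : vpa) : Prop :=
  (exists q0, forall q, vinit A q <-> q = q0) /\
  (forall (c : config A) a c1 c2, vstep c a c1 -> vstep c a c2 -> c1 = c2).

Definition vcomplete (A : vpa) : Prop :=
  (exists q0, vinit A q0) /\ (forall (c : config A) a, exists c', vstep c a c').

Definition strict_total (r : rel Sigma) : Prop :=
  (forall a, ~~ r a a) /\
  (forall a b c, r a b -> r b c -> r a c) /\
  (forall a b, a != b -> r a b || r b a).

Definition contextual_order (prec : seq Sigma -> rel Sigma) : Prop :=
  forall w, strict_total (prec w).

Definition vp_contextual_order (prec : seq Sigma -> rel Sigma) : Prop :=
  contextual_order prec /\
  exists (A : vpa) (ord : vst A -> rel Sigma),
    vdeterministic A /\ vcomplete A /\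
    (forall q, strict_total (ord q)) /\
    (forall w q0 (c : config A), vinit A q0 -> vrun (q0, [::]) w c -> prec w = ord c.1).

Definition word_le (prec : seq Sigma -> rel Sigma) (s r : seq Sigma) : Prop :=
  prefix s r \/
  exists al a be b ga, s = al ++ a :: be /\ r = al ++ b :: ga /\ prec al a b.

Variable n : nat.
Variable comp : Sigma -> 'I_n.  (* a \in Sigma~_i  iff  comp a = i *)

Definition proj (i : 'I_n) (w : seq Sigma) : seq Sigma :=
  filter (fun a => comp a == i) w.

Definition shuffle (P : 'I_n -> seq Sigma -> Prop) (w : seq Sigma) : Prop :=
  forall i, P i (proj i w).

Definition well_nested (w : seq Sigma) : Prop :=
  forall u a v b y, w = u ++ a :: v ++ b :: y ->
    kind a = Call -> kind b = Ret -> balanced v -> comp a = comp b.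

Definition bowtie (P : 'I_n -> seq Sigma -> Prop) (w : seq Sigma) : Prop :=
  shuffle P w /\ well_nested w.

Inductive swap_step : seq Sigma -> seq Sigma -> Prop :=
| Swap u a b v : comp a != comp b -> swap_step (u ++ a :: b :: v) (u ++ b :: a :: v).

Definition equivI : seq Sigma -> seq Sigma -> Prop := clos_refl_trans _ swap_step.

Definition red (prec : seq Sigma -> rel Sigma) (L : seq Sigma -> Prop)
    (w : seq Sigma) : Prop :=
  L w /\ forall u, L u -> equivI u w -> word_le prec u w -> u = w.

End VP.

(* A word of P_1 ⋈ ... ⋈ P_n is not reduced iff one of its letters a, of
   component k, can be commuted to the left across a block b β of letters of
   other components, to a prefix α after which a ≺_α b.  Such a move stays in
   the language as soon as, when a is a return, the innermost pending call
   after α belongs to component k (a call is moved together with its matching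
   return and the k-letters in between).  Hence whether a letter may be read
   next only depends on finitely many sets of "forbidden" letters, one per
   component, which are updated letter by letter from the current order and
   the component of the innermost pending call.  The reduced words are then
   recognised by running the order automaton and the automata of the P_i in
   parallel, keeping these sets in the state and the components of the
   pending calls on the stack. *)

From Stdlib Require Import Relations.
From mathcomp Require Import all_boot zify.

Set Implicit Arguments.
Unset Strict Implicit.
Unset Printing Implicit Defensive.

Lemma catI (T : Type) : right_injective (@cat T).
Proof. by elim=> //= x s IH a b [/IH]. Qed.

Lemma filter_nilP {T : Type} {p : pred T} {s} :
  reflect (filter p s = [::]) (all (fun x => ~~ p x) s).
Proof.
elim: s => [|x s IH] /=; first by constructor.
by case: (p x) => /=; [constructor | exact: IH].
Qed.

Lemma filter_eq_cat_cons (T : Type) (p : pred T) x y c z :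
  filter p x = y ++ c :: z ->
  exists x1 x2, [/\ x = x1 ++ c :: x2, filter p x1 = y, filter p x2 = z & p c].
Proof.
elim: x y => [|a x IH] y /=; first by case: y.
case: ifP => pa; last first.
  by case/IH=> x1 [x2 [-> <- <- pc]]; exists (a :: x1), x2; rewrite /= pa.
case: y => [|b y] /= [<-]; first by move=> <-; exists [::], x.
by case/IH=> x1 [x2 [-> <- <- pc]]; exists (a :: x1), x2; rewrite /= pa.
Qed.

Lemma rcons_eq_cat_cons (T : Type) (s x y : seq T) b c : rcons s b = x ++ c :: y ->
  [/\ y = [::], x = s & c = b] \/ exists2 y', y = rcons y' b & s = x ++ c :: y'.
Proof.
case/lastP: y => [|y d]; first by rewrite cats1 => /rcons_inj [-> ->]; left.
by rewrite -rcons_cons -rcons_cat => /rcons_inj [-> ->]; right; exists y.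
Qed.

Section TraceEquivalence.
Variables (Sigma : finType) (n : nat) (comp : Sigma -> 'I_n).

Lemma proj_cat i x y : proj comp i (x ++ y) = proj comp i x ++ proj comp i y.
Proof. exact: filter_cat. Qed.

Lemma proj_cons i c x :
  proj comp i (c :: x) = if comp c == i then c :: proj comp i x else proj comp i x.
Proof. by []. Qed.

Lemma proj_rcons i x a :
  proj comp i (rcons x a) = if comp a == i then rcons (proj comp i x) a else proj comp i x.
Proof. exact: filter_rcons. Qed.

Lemma equivI_size u w : equivI comp u w -> size u = size w.
Proof. by elim=> [_ _ [? ? ? ? _]|//|? ? ? _ -> _ ->] //; rewrite !size_cat. Qed.

Lemma equivI_cons c u w : equivI comp u w -> equivI comp (c :: u) (c :: w).
Proof.
elim=> [_ _ [x a b y Hab]|x|x y z _ Hxy _ Hyz].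
- by apply: rt_step; rewrite -!cat_cons; apply: Swap.
- exact: rt_refl.
- exact: rt_trans Hxy Hyz.
Qed.

Lemma equivI_shift a z w : all (fun c => comp c != comp a) z ->
  equivI comp (a :: z ++ w) (z ++ a :: w).
Proof.
elim: z => [_|c z IH /= /andP [Hc Hz]]; first exact: rt_refl.
apply: rt_trans (equivI_cons c (IH Hz)); apply: rt_step.
by apply: (@Swap _ _ comp [::]); rewrite eq_sym.
Qed.

Lemma equivIP u w : equivI comp u w <-> forall i, proj comp i u = proj comp i w.
Proof.
split.
  elim=> [_ _ [x a b y Hab]|//|x y z _ Hxy _ Hyz] i; last by rewrite Hxy Hyz.
  rewrite !(proj_cat, proj_cons).
  case: (comp a == i) /eqP => Ha; case: (comp b == i) /eqP => Hb //.
  by move: Hab; rewrite Ha Hb eqxx.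
elim: u w => [|a u IH] w Hp.
  case: w Hp => [|b w] Hp; first exact: rt_refl.
  by have := Hp (comp b); rewrite !proj_cons eqxx.
have := Hp (comp a); rewrite proj_cons eqxx => /esym Hw.
have [w1 [w2 [Ew /filter_nilP Hw1 _ _]]] := filter_eq_cat_cons (y := [::]) Hw; subst w.
have Pw1 : proj comp (comp a) w1 = [::] := elimT filter_nilP Hw1.
apply: rt_trans (equivI_cons a (IH _ _)) (equivI_shift _ Hw1) => i.
by have := Hp i; rewrite !(proj_cat, proj_cons); case: eqP => [<-|_ //]; rewrite Pw1 => -[->].
Qed.

Definition erase j (x : seq Sigma) := [seq c <- x | comp c != j].

Lemma proj_erase i j x : proj comp i (erase j x) = if i == j then [::] else proj comp i x.
Proof.
rewrite /proj /erase -filter_predI; case: eqP => [->|/eqP Hij].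
  by apply/filter_nilP/allP => c _ /=; rewrite andbN.
by apply: eq_filter => c /=; case: eqP => // ->.
Qed.

Lemma proj_proj i j x : proj comp i (proj comp j x) = if i == j then proj comp j x else [::].
Proof.
rewrite /proj -filter_predI; case: eqP => [->|/eqP Hij].
  by apply: eq_filter => c /=; rewrite andbb.
by apply/filter_nilP/allP => c _ /=; case: eqP => // ->.
Qed.

Lemma proj_move_block i a z t1 r t2 : comp r = comp a -> all (fun c => comp c != comp a) z ->
  proj comp i (a :: proj comp (comp a) t1 ++ r :: z ++ erase (comp a) t1 ++ t2) =
  proj comp i (z ++ a :: t1 ++ r :: t2).
Proof.
move=> Cr Hz; have Pz : proj comp (comp a) z = [::] := elimT filter_nilP Hz.
rewrite !(proj_cat, proj_cons) proj_proj proj_erase Cr.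
by case: (eqVneq (comp a) i) => [<-|_]; rewrite ?Pz.
Qed.

End TraceEquivalence.

Section Nesting.
Variables (Sigma : finType) (kind : Sigma -> vkind) (n : nat) (comp : Sigma -> 'I_n).
Local Notation erase := (erase comp).

(* [nest_run [::] w] lists the components of the pending calls of [w],
   innermost first; it fails on a pending return and on a return matched
   with a call of another component. *)
Definition nest_step (s : seq 'I_n) (a : Sigma) : option (seq 'I_n) :=
  match kind a with
  | Call => Some (comp a :: s)
  | Ret => if s is k :: s' then (if k == comp a then Some s' else None) else None
  | Int => Some s
  end.

Fixpoint nest_run (s : seq 'I_n) (w : seq Sigma) : option (seq 'I_n) :=
  if w is a :: w' then (if nest_step s a is Some s' then nest_run s' w' else None)
  else Some s.

Lemma nest_run_cat s x y :
  nest_run s (x ++ y) = if nest_run s x is Some s' then nest_run s' y else None.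
Proof. by elim: x s => [|a x IH] s //=; case: (nest_step s a). Qed.

Lemma nest_run_rcons s x a :
  nest_run s (rcons x a) = if nest_run s x is Some s' then nest_step s' a else None.
Proof. by rewrite -cats1 nest_run_cat; case: (nest_run s x) => //= s'; case: nest_step. Qed.

Lemma nest_run_failure s w : nest_run s w = None ->
  exists x b y σ, [/\ w = x ++ b :: y, nest_run s x = Some σ & nest_step σ b = None].
Proof.
elim: w s => [|a w IH] s //=; case E: (nest_step s a) => [s'|] => [/IH|_].
  by move=> [x [b [y [σ [-> R C]]]]]; exists (a :: x), b, y, σ; rewrite /= E.
by exists [::], a, w, s.
Qed.

Fixpoint depth (d : nat) (w : seq Sigma) : option nat :=
  match w with
  | [::] => Some d
  | a :: w' => match kind a with
               | Call => depth d.+1 w'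
               | Ret => if d is d'.+1 then depth d' w' else None
               | Int => depth d w'
               end
  end.

Lemma bal_auxE d w : bal_aux kind d w = (depth d w == Some 0).
Proof.
elim: w d => [|a w IH] d /=; first by case: d.
by case: (kind a); rewrite ?IH //; case: d.
Qed.

Lemma balancedP v : reflect (depth 0 v = Some 0) (balanced kind v).
Proof. by rewrite /balanced bal_auxE; apply: eqP. Qed.

Lemma depth_cat d x y : depth d (x ++ y) = if depth d x is Some e then depth e y else None.
Proof. by elim: x d => [|a x IH] d //=; case: (kind a); rewrite ?IH //; case: d. Qed.

Lemma depth_addn w d e k : depth d w = Some e -> depth (d + k) w = Some (e + k).
Proof.
elim: w d e => [|a w IH] d e /=; first by case=> ->.
by case: (kind a) => [/(IH d.+1)|//|/IH]; case: d => // d /IH.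
Qed.

Definition is_call a := if kind a is Call then true else false.
Definition is_ret a := if kind a is Ret then true else false.

Lemma depth_count w d e : depth d w = Some e -> e + count is_ret w = d + count is_call w.
Proof.
elim: w d e => [|a w IH] d e /=; first by case=> ->.
rewrite /is_call /is_ret; case: (kind a).
- by move/IH; rewrite /is_call /is_ret; lia.
- by case: d => // d /IH; rewrite /is_call /is_ret; lia.
- by move/IH; rewrite /is_call /is_ret; lia.
Qed.

Lemma nest_run_balanced v μ τ : balanced kind v -> nest_run μ v = Some τ -> τ = μ.
Proof.
move/balancedP.
suff gen d ρ : depth d v = Some 0 -> size ρ = d -> nest_run (ρ ++ μ) v = Some τ -> τ = μ.
  by move/(gen 0 [::]); apply.
elim: v d ρ => [|a v IH] d ρ /=; first by move=> [->]; case: ρ => //= _ [->].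
rewrite /nest_step; case: (kind a); last exact: IH.
- by move=> Hd Hs; apply: (IH d.+1 (comp a :: ρ)); rewrite //= Hs.
- by case: d ρ => // d [|k ρ] // Hd [Hs]; case: ifP => // _; apply: IH Hs.
Qed.

Lemma nest_run_well_nested s w : nest_run s w <> None -> well_nested kind comp w.
Proof.
move=> Hw x a v b y Ew Ka Kb Bv; move: Hw; rewrite {}Ew nest_run_cat.
case: (nest_run s x) => // σ /=; rewrite {1}/nest_step Ka nest_run_cat.
case Ev: (nest_run (comp a :: σ) v) => [τ|] //.
by rewrite (nest_run_balanced Bv Ev) /= /nest_step Kb; case: eqP.
Qed.

Lemma nest_run_top x k σ : nest_run [::] x = Some (k :: σ) ->
  exists x1 c v, [/\ x = x1 ++ c :: v, kind c = Call, comp c = k, balanced kind v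
                   & nest_run [::] x1 = Some σ].
Proof.
have [m] := ubnP (size x); elim: m x k σ => // m IH x k σ.
case/lastP: x => [//|x y]; rewrite size_rcons ltnS => Hx.
rewrite nest_run_rcons; case Ex: (nest_run [::] x) => [τ|] //.
rewrite /nest_step; case Ky: (kind y).
- by case=> <- <-; exists x, y, [::]; rewrite cats1.
- case: τ Ex => // j τ Ex; case: ifP => // /eqP Ej [Eτ]; subst τ.
  have [x1 [c1 [v1 [Ex1 Kc1 _ /balancedP Bv1 Ex1']]]] := IH x _ _ Hx Ex; subst x.
  have Hx1 : size x1 < m by move: Hx; rewrite size_cat /=; lia.
  have [x2 [c [v2 [-> Kc Cc /balancedP Bv2 Ex2]]]] := IH x1 _ _ Hx1 Ex1'.
  exists x2, c, (v2 ++ c1 :: rcons v1 y); split => //; first by rewrite -!cats1 -!catA.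
  by apply/balancedP; rewrite depth_cat Bv2 /= Kc1 -cats1 depth_cat (depth_addn 1 Bv1) /= Ky.
- case=> Eτ; subst τ.
  have [x1 [c [v [-> Kc Cc /balancedP Bv Ex1]]]] := IH x _ _ Hx Ex.
  exists x1, c, (rcons v y); split => //; first by rewrite rcons_cat.
  by apply/balancedP; rewrite -cats1 depth_cat Bv /= Ky.
Qed.

Lemma count_nest_run j x s t : nest_run s x = Some t ->
  count_mem j t + count is_ret (proj comp j x) = count_mem j s + count is_call (proj comp j x).
Proof.
elim: x s t => [|a x IH] s t /=; first by case=> ->.
rewrite /nest_step /proj /=; case Ka: (kind a).
- move/IH; rewrite /proj /=; case: eqP => /= E; rewrite /is_call /is_ret ?Ka; lia.
- case: s => // k s; case: ifP => // /eqP <- /IH; rewrite /proj /=.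
  case: eqP => /= E; rewrite /is_call /is_ret ?Ka; lia.
- move/IH; rewrite /proj /=; case: eqP => /= E; rewrite /is_call /is_ret ?Ka; lia.
Qed.

Lemma open_call_on_stack j x σ y c v : nest_run [::] x = Some σ ->
  proj comp j x = y ++ c :: v -> kind c = Call -> balanced kind v -> j \in σ.
Proof.
move=> Ex Epx Kc /balancedP /depth_count; rewrite add0n => Cv.
have [x1 [x2 [Ex12 Px1 _ _]]] := filter_eq_cat_cons Epx.
change (proj comp j x1 = y) in Px1.
have [σ1 Ex1] : exists σ1, nest_run [::] x1 = Some σ1.
  by move: Ex; rewrite Ex12 nest_run_cat; case: (nest_run [::] x1) => // σ1; exists σ1.
have := count_nest_run j Ex1; have := count_nest_run j Ex.
rewrite Px1 Epx !count_cat /= /is_call /is_ret Kc /= -/is_call -/is_ret.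
by case: (boolP (j \in σ)) => // /count_memPn ->; lia.
Qed.

(* The [j] below [s] survives when the [j]-letters of [x] close exactly the
   [j]-calls recorded in [s]; erasing component [j] then makes the run
   oblivious to the stack below. *)
Lemma nest_run_erase j x s μ t :
  depth (count_mem j s) (proj comp j x) = Some 0 -> nest_run (s ++ j :: μ) x = Some t ->
  exists ρ, [/\ t = ρ ++ j :: μ, j \notin ρ & forall μ',
    nest_run ([seq k <- s | k != j] ++ μ') (erase j x) = Some ([seq k <- ρ | k != j] ++ μ')].
Proof.
elim: x s t => [|a x IH] s t /=.
  by move=> [/count_memPn Hs] [<-]; exists s.
rewrite /proj /erase /=; case: (eqVneq (comp a) j) => [Ea|Na] /=.
  rewrite /nest_step; case: (kind a) => [Hd Hr|Hd|]; last exact: IH.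
    by rewrite Ea in Hr; have := IH (j :: s) t; rewrite /= eqxx /=; apply.
  case: s Hd => [|k s] //= Hd; case: ifP => // /eqP Ek Hr.
  by rewrite Ek Ea eqxx /= in Hd *; apply: IH Hd Hr.
move=> Hd; rewrite {1}/nest_step; case Ka: (kind a).
- move=> Hr; have := IH (comp a :: s) t; rewrite /= (negbTE Na) /= => /(_ Hd Hr) [ρ [Et Hρ Hrun]].
  by exists ρ; split => // μ'; rewrite /nest_step Ka.
- case: s Hd => [|k s] /= Hd; first by rewrite eq_sym (negbTE Na).
  case: ifP => // /eqP Ek Hr; subst k; rewrite (negbTE Na) in Hd.
  have [ρ [Et Hρ Hrun]] := IH s t Hd Hr.
  by exists ρ; split => // μ'; rewrite /= Na /nest_step Ka /= eqxx.
- move=> Hr; have [ρ [Et Hρ Hrun]] := IH s t Hd Hr.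
  by exists ρ; split => // μ'; rewrite /nest_step Ka.
Qed.

Lemma nest_run_block j v d μ : all (fun a => comp a == j) v -> depth d v = Some 0 ->
  nest_run (nseq d j ++ μ) v = Some μ.
Proof.
elim: v d => [|a v IH] d /=; first by move=> _ [->].
case/andP => /eqP Ea Hv; rewrite /nest_step Ea; case: (kind a) => [|//|]; last exact: IH.
- exact: (IH d.+1).
by case: d => // d; rewrite /= eqxx; apply: IH.
Qed.

Lemma nest_step_ret_above j ρ μ r : j \notin ρ -> kind r = Ret -> comp r = j ->
  nest_step (ρ ++ j :: μ) r <> None -> ρ = [::].
Proof.
case: ρ => // k ρ; rewrite /nest_step inE negb_or => /andP [Hk _] -> ->.
by rewrite /= eq_sym (negbTE Hk).
Qed.

Lemma nest_run_call s a w : kind a = Call -> nest_run s (a :: w) = nest_run (comp a :: s) w.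
Proof. by move=> Ka; rewrite /= /nest_step Ka. Qed.

Lemma nest_run_ret s a w k : kind a = Ret -> comp a = k ->
  nest_run (k :: s) (a :: w) = nest_run s w.
Proof. by move=> Ka <-; rewrite /= /nest_step Ka eqxx. Qed.

Lemma nest_run_int s a w : kind a = Int -> nest_run s (a :: w) = nest_run s w.
Proof. by move=> Ka; rewrite /= /nest_step Ka. Qed.

Lemma nest_run_move_int σ a z δ : kind a = Int ->
  nest_run σ (a :: z ++ δ) = nest_run σ (z ++ a :: δ).
Proof.
by move=> Ka; rewrite nest_run_int // !nest_run_cat; case: nest_run => // s; rewrite nest_run_int.
Qed.

Lemma nest_run_move_ret σ a z δ : kind a = Ret -> all (fun c => comp c != comp a) z ->
  nest_run (comp a :: σ) (z ++ a :: δ) <> None ->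
  nest_run (comp a :: σ) (a :: z ++ δ) = nest_run (comp a :: σ) (z ++ a :: δ).
Proof.
move=> Ka Hz; rewrite nest_run_cat; case Ez: nest_run => [τ|//] Hne.
have Hd : depth (count_mem (comp a) [::]) (proj comp (comp a) z) = Some 0.
  by rewrite /proj (elimT filter_nilP Hz).
have [ρ [Eτ Hρ Hrun]] := nest_run_erase Hd Ez; subst τ.
have Eρ : ρ = [::].
  by apply: (nest_step_ret_above (μ := σ) Hρ Ka erefl); move: Hne => /=; case: nest_step.
by subst ρ; rewrite cat0s !nest_run_ret // nest_run_cat -(all_filterP Hz) Hrun.
Qed.

Lemma nest_run_move_call σ a z t1 r t2 :
  kind a = Call -> kind r = Ret -> comp r = comp a -> all (fun c => comp c != comp a) z ->
  balanced kind (proj comp (comp a) t1) -> nest_run σ (z ++ a :: t1 ++ r :: t2) <> None ->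
  nest_run σ (a :: proj comp (comp a) t1 ++ r :: z ++ erase (comp a) t1 ++ t2) =
  nest_run σ (z ++ a :: t1 ++ r :: t2).
Proof.
move=> Ka Kr Cr Hz /balancedP Bv.
rewrite nest_run_cat; case Ez: (nest_run σ z) => [σz|//].
rewrite nest_run_call // nest_run_cat; case Et1: (nest_run _ t1) => [τ|//] Hne.
have [ρ [Eτ Hρ Hrun]] := nest_run_erase (s := [::]) Bv Et1; subst τ.
have Eρ : ρ = [::].
  by apply: (nest_step_ret_above (μ := σz) Hρ Kr Cr); move: Hne => /=; case: nest_step.
subst ρ; rewrite nest_run_call // nest_run_cat (nest_run_block (d := 0) _ (filter_all _ _) Bv).
by rewrite cat0s !(nest_run_ret _ _ Kr Cr) nest_run_cat Ez nest_run_cat Hrun.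
Qed.

Definition top_comp α := if nest_run [::] α is Some (k :: _) then Some k else None.

(* A letter [y] of component [k] can be placed where the innermost pending
   call belongs to component [t] without breaking the nesting. *)
Definition fits_top (t : option 'I_n) y k := if kind y is Ret then t == Some k else true.

Definition insertable α := fits_top (top_comp α).

End Nesting.

Section Bowtie.
Variables (Sigma : finType) (kind : Sigma -> vkind) (n : nat) (comp : Sigma -> 'I_n).
Variable P : 'I_n -> seq Sigma -> Prop.
Hypothesis P_well_matched : forall i w, P i w -> well_matched kind w.

Local Notation nest_run := (nest_run kind comp).
Local Notation bowtie := (bowtie kind comp P).

Lemma bowtie_nest_run w : bowtie w -> nest_run [::] w <> None.
Proof.
case=> Hsh Hwn /nest_run_failure [x [b [y [σ [Ew Ex]]]]].
rewrite /nest_step; case Kb: (kind b) => //; case: σ Ex => [|k σ] Ex.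
  (* The stack is empty, yet the call matching [b] in its projection is open. *)
  have Ep : proj comp (comp b) w = proj comp (comp b) x ++ b :: proj comp (comp b) y.
    by rewrite Ew proj_cat proj_cons eqxx.
  have [_ /(_ Kb) [y0 [c [v [Ex' [Kc Bv]]]]]] := P_well_matched (Hsh (comp b)) Ep.
  by have := open_call_on_stack Ex Ex' Kc Bv.
case: ifP => // /negbT/eqP Hk _; apply: Hk.
have [x1 [c [v [Ex1 Kc <- Bv _]]]] := nest_run_top Ex.
by apply: (Hwn x1 c v b y) => //; rewrite Ew Ex1 -catA.
Qed.

Lemma bowtieP w : bowtie w <-> shuffle comp P w /\ nest_run [::] w <> None.
Proof.
split=> [Lw|[Hsh Hw]]; first by split; [case: Lw | exact: bowtie_nest_run].
by split=> //; apply: nest_run_well_nested Hw.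
Qed.

Lemma bowtie_of_proj u w : bowtie w -> (forall i, proj comp i u = proj comp i w) ->
  nest_run [::] u <> None -> bowtie u.
Proof. by case/bowtieP=> Hsh _ Hp Hu; apply/bowtieP; split=> // i; rewrite /shuffle Hp. Qed.

Lemma bowtie_move_front α z a δ : bowtie (α ++ z ++ a :: δ) ->
  all (fun c => comp c != comp a) z -> insertable kind comp α a (comp a) ->
  exists γ, bowtie (α ++ a :: γ) /\ equivI comp (α ++ a :: γ) (α ++ z ++ a :: δ).
Proof.
move=> Lw Hz Hins; have /bowtieP [Hsh] := Lw.
rewrite nest_run_cat; case Eα: (nest_run [::] α) => [σ|//] Hw.
have Hshift : forall i, proj comp i (α ++ a :: z ++ δ) = proj comp i (α ++ z ++ a :: δ).
  by move=> i; rewrite [LHS]proj_cat [RHS]proj_cat ((equivIP _ _ _).1 (equivI_shift δ Hz)).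
suff [γ Hp Hu] : exists2 γ, (forall i, proj comp i (α ++ a :: γ) = proj comp i (α ++ z ++ a :: δ))
                          & nest_run σ (a :: γ) <> None.
  exists γ; split; last exact/equivIP.
  by apply: bowtie_of_proj Lw Hp _; rewrite nest_run_cat Eα.
move: Hins; rewrite /insertable /fits_top /top_comp Eα; case Ka: (kind a).
- (* The call is moved together with its matching return [r] and the
     [comp a]-letters in between, so that no letter of [z] gets nested in it. *)
  move=> _; have Ep : proj comp (comp a) (α ++ z ++ a :: δ) =
             proj comp (comp a) (α ++ z) ++ a :: proj comp (comp a) δ.
    by rewrite catA proj_cat proj_cons eqxx.
  have [/(_ Ka) [v [r [y [Eδ [Kr Bv]]]]] _] := P_well_matched (Hsh (comp a)) Ep.
  have [t1 [t2 [Et Pt1 Pt2 /eqP Cr]]] := filter_eq_cat_cons Eδ; subst δ.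
  exists (proj comp (comp a) t1 ++ r :: z ++ erase comp (comp a) t1 ++ t2).
    by move=> i; rewrite [LHS]proj_cat [RHS]proj_cat proj_move_block.
  by rewrite nest_run_move_call // /proj Pt1.
- case: σ Eα Hw => [|k σ] // Eα Hw /eqP [Ek]; subst k.
  by exists (z ++ δ); rewrite // nest_run_move_ret.
- by move=> _; exists (z ++ δ); rewrite // nest_run_move_int.
Qed.

End Bowtie.

Section Forbidden.
Variables (Sigma : finType) (kind : Sigma -> vkind) (n : nat) (comp : Sigma -> 'I_n).
Variable prec : seq Sigma -> rel Sigma.

Local Notation insertable := (insertable kind comp).

Fixpoint forbidden_rev (r : seq Sigma) (k : 'I_n) : {set Sigma} :=
  if r is b :: r' then
    if comp b == k then set0
    else forbidden_rev r' k :|: [set y | prec (rev r') y b && insertable (rev r') y k]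
  else set0.

Definition forbidden γ k := forbidden_rev (rev γ) k.

Lemma forbidden_rcons γ b k : forbidden (rcons γ b) k =
  if comp b == k then set0 else forbidden γ k :|: [set y | prec γ y b && insertable γ y k].
Proof. by rewrite /forbidden rev_rcons /= revK. Qed.

Lemma forbiddenP γ k y : reflect
  (exists α b β, [/\ γ = α ++ b :: β, comp b != k, all (fun c => comp c != k) β,
                     prec α y b & insertable α y k])
  (y \in forbidden γ k).
Proof.
elim/last_ind: γ => [|γ b IH].
  by rewrite /forbidden in_set0; constructor=> -[[|? ?] [b [β []]]].
rewrite forbidden_rcons; case: eqP => Hb.
  rewrite in_set0; constructor=> -[α [b' [β [Eγ Hb' Hβ _ _]]]].
  case: (rcons_eq_cat_cons Eγ) => [[_ _ Eb]|[β' Eβ _]]; first by rewrite Eb Hb eqxx in Hb'.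
  by rewrite Eβ all_rcons Hb eqxx in Hβ.
rewrite !inE; apply: (iffP orP) => [[/IH [α [b' [β [-> ? ? ? ?]]]] | /andP [? ?]]|].
- by exists α, b', (rcons β b); rewrite rcons_cat all_rcons; split=> //; apply/andP; split => //; apply/eqP.
- by exists γ, b, [::]; rewrite cats1; split=> //; apply/eqP.
move=> [α [b' [β [Eγb ? Hβ ? ?]]]].
case: (rcons_eq_cat_cons Eγb) => [[Eβ Eα Eb]|[β' Eβ Eγ]]; first by right; subst; apply/andP.
left; apply/IH; exists α, b', β'; split=> //.
by move: Hβ; rewrite Eβ all_rcons => /andP [].
Qed.

Definition avoids_forbidden w :=
  forall γ a δ, w = γ ++ a :: δ -> a \notin forbidden γ (comp a).

Variable P : 'I_n -> seq Sigma -> Prop.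
Hypothesis P_well_matched : forall i w, P i w -> well_matched kind w.
Hypothesis prec_irr : forall w a, ~~ prec w a a.

Local Notation bowtie := (bowtie kind comp P).

Lemma red_avoids_forbidden w : red comp prec bowtie w -> avoids_forbidden w.
Proof.
case=> Lw Hmin γ a δ Ew; apply/negP => /forbiddenP [α [b [β [Eγ Hb Hβ Hprec Hins]]]].
subst γ w; rewrite -catA in Lw Hmin.
have Hz : all (fun c => comp c != comp a) (b :: β) by rewrite /= Hb.
have [γ' [Lu Hequ]] := bowtie_move_front P_well_matched Lw Hz Hins.
have Hle : word_le prec (α ++ a :: γ') (α ++ (b :: β) ++ a :: δ).
  by right; exists α, a, γ', b, (β ++ a :: δ).
by move: (Hmin _ Lu Hequ Hle) Hb => /catI [->]; rewrite eqxx.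
Qed.

Lemma red_of_avoids_forbidden w : bowtie w -> avoids_forbidden w -> red comp prec bowtie w.
Proof.
move=> Lw Hw; split=> // u Lu Hequ [|[α [a [β [b [δ [Eu [Ew Hprec]]]]]]]].
  by rewrite prefixE (equivI_size Hequ) take_size => /eqP.
exfalso; subst u w; have /equivIP/(_ (comp a)) := Hequ.
rewrite !proj_cat !proj_cons eqxx => /catI.
case: eqP => [Eab [Eba]|Hba /esym Eδ]; first by rewrite Eba (negbTE (prec_irr _ _)) in Hprec.
have [β1 [δ' [Eδ' /filter_nilP Hβ1 _ _]]] := filter_eq_cat_cons (y := [::]) Eδ.
apply: (negP (Hw (α ++ b :: β1) a δ' _)); first by rewrite Eδ' -catA.
apply/forbiddenP; exists α, b, β1; split=> //; first exact/eqP.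
rewrite /insertable /fits_top; case Ka: (kind a) => //.
move/bowtie_nest_run: Lu => /(_ P_well_matched); rewrite /top_comp nest_run_cat.
by case: (nest_run _ _ [::] α) => [[|k σ]|] //=; rewrite /nest_step Ka; case: eqP => // ->.
Qed.

Lemma red_bowtieP w : red comp prec bowtie w <-> bowtie w /\ avoids_forbidden w.
Proof.
split=> [Hw|[Lw Hw]]; last exact: red_of_avoids_forbidden.
by split; [case: Hw | exact: red_avoids_forbidden].
Qed.

End Forbidden.

Section Runs.
Variables (Sigma : finType) (kind : Sigma -> vkind) (A : vpa Sigma).

Lemma vrun_rcons (c c1 c2 : config A) x a :
  vrun kind c x c1 -> vstep kind c1 a c2 -> vrun kind c (rcons x a) c2.
Proof.
elim=> [c0|c0 b c0' w c0'' Hs _ IH] Hs2 /=; first exact: RunCons Hs2 (RunNil _ _).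
exact: RunCons Hs (IH Hs2).
Qed.

Lemma vrun_nil_inv (c c' : config A) : vrun kind c [::] c' -> c' = c.
Proof. by move=> H; inversion H. Qed.

Lemma vrun_cons_inv (c c' : config A) a x :
  vrun kind c (a :: x) c' -> exists2 c1, vstep kind c a c1 & vrun kind c1 x c'.
Proof. by move=> H; inversion H; subst; eexists; eauto. Qed.

Lemma vstep_call_inv (q : vst A) s a c' : kind a = Call -> vstep kind (q, s) a c' ->
  exists q' g, c' = (q', g :: s) /\ dcall q a q' g.
Proof. by move=> Ka H; inversion H; subst; try congruence; do 2 eexists; eauto. Qed.

Lemma vstep_ret_inv (q : vst A) g s a c' : kind a = Ret -> vstep kind (q, g :: s) a c' ->
  exists2 q', c' = (q', s) & dret q a (Some g) q'.
Proof. by move=> Ka H; inversion H; subst; try congruence; eexists; eauto. Qed.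

Lemma vstep_ret_bot_inv (q : vst A) a c' : kind a = Ret -> vstep kind (q, [::]) a c' ->
  exists2 q', c' = (q', [::]) & dret q a None q'.
Proof. by move=> Ka H; inversion H; subst; try congruence; eexists; eauto. Qed.

Lemma vstep_int_inv (q : vst A) s a c' : kind a = Int -> vstep kind (q, s) a c' ->
  exists2 q', c' = (q', s) & dint q a q'.
Proof. by move=> Ka H; inversion H; subst; try congruence; eexists; eauto. Qed.

End Runs.

Section Product.
Variables (Sigma : finType) (kind : Sigma -> vkind) (n : nat) (comp : Sigma -> 'I_n).
Variables (prec : seq Sigma -> rel Sigma) (Aord : vpa Sigma) (ord : vst Aord -> rel Sigma).
Hypothesis ord_prec : forall w q0 (c : config Aord),
  vinit q0 -> vrun kind (q0, [::]) w c -> prec w = ord c.1.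
Variable Af : 'I_n -> vpa Sigma.

Local Notation nest_run := (nest_run kind comp).
Local Notation nest_step := (nest_step kind comp).
Local Notation forbidden := (forbidden kind comp prec).
Local Notation fits_top := (fits_top kind).

(* A state holds the states of the order automaton and of the component
   automata, the forbidden sets, and the component of the innermost pending
   call; a stack symbol holds the symbols pushed by the order automaton and by
   the calling component, and the previous innermost component. *)
Definition comp_states := {dffun forall i, vst (Af i)}.
Definition comp_sym := {i : 'I_n & vgam (Af i)}.
Definition pstate :=
  (vst Aord * comp_states * {ffun 'I_n -> {set Sigma}} * option 'I_n)%type.
Definition psym := (vgam Aord * comp_sym * option 'I_n)%type.

Definition forbidden_upd (F : {ffun 'I_n -> {set Sigma}}) qo t a :=
  [ffun k => if comp a == k then set0 else F k :|: [set y | ord qo y a && fits_top t y k]].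

Definition agree_except (qs qs' : comp_states) j := [forall k, (k != j) ==> (qs' k == qs k)].

Definition prod_call (c : pstate) a (c' : pstate) (g : psym) : bool :=
  let: (qo, qs, F, t) := c in let: (qo', qs', F', t') := c' in let: (go, s, t0) := g in
  [&& dcall qo a qo' go, tag s == comp a, dcall (qs (tag s)) a (qs' (tag s)) (tagged s),
      agree_except qs qs' (tag s), a \notin F (comp a), F' == forbidden_upd F qo t a,
      t' == Some (comp a) & t0 == t].

Definition prod_ret (c : pstate) a (og : option psym) (c' : pstate) : bool :=
  let: (qo, qs, F, t) := c in let: (qo', qs', F', t') := c' in
  if og is Some (go, s, t0) then
    [&& dret qo a (Some go) qo', tag s == comp a,
        dret (qs (tag s)) a (Some (tagged s)) (qs' (tag s)), agree_except qs qs' (tag s),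
        a \notin F (comp a), F' == forbidden_upd F qo t a & t' == t0]
  else false.

Definition prod_int (c : pstate) a (c' : pstate) : bool :=
  let: (qo, qs, F, t) := c in let: (qo', qs', F', t') := c' in
  [&& dint qo a qo', dint (qs (comp a)) a (qs' (comp a)), agree_except qs qs' (comp a),
      a \notin F (comp a), F' == forbidden_upd F qo t a & t' == t].

Definition prod_init : pred pstate := fun c => let: (qo, qs, F, t) := c in
  [&& vinit qo, [forall i, vinit (qs i)], F == [ffun=> set0] & t == None].

Definition prod_final : pred pstate := fun c => let: (_, qs, _, _) := c in
  [forall i, vfinal (qs i)].

Definition prod_vpa : vpa Sigma :=
  @VPA Sigma pstate psym prod_init prod_final prod_call prod_ret prod_int.

Definition sym_at i (s : comp_sym) : option (vgam (Af i)) :=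
  if tag s =P i is ReflectT e then Some (ecast k (vgam (Af k)) e (tagged s)) else None.

Lemma sym_at_tag s : sym_at (tag s) s = Some (tagged s).
Proof. by rewrite /sym_at; case: eqP => // e; rewrite (eq_axiomK e). Qed.

Lemma sym_at_other i s : tag s != i -> sym_at i s = None.
Proof. by rewrite /sym_at; case: eqP. Qed.

Definition set_state (qs : comp_states) j (x : vst (Af j)) : comp_states :=
  [ffun k => if j =P k is ReflectT e then ecast k (vst (Af k)) e x else qs k].
Arguments set_state : clear implicits.

Lemma set_state_same qs j x : set_state qs j x j = x.
Proof. by rewrite ffunE; case: eqP => // e; rewrite (eq_axiomK e). Qed.

Lemma set_state_other qs j x k : j != k -> set_state qs j x k = qs k.
Proof. by rewrite ffunE; case: eqP. Qed.

Lemma agree_except_set_state qs j x : agree_except qs (set_state qs j x) j.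
Proof. by apply/forallP => k; apply/implyP => Hk; rewrite set_state_other // eq_sym. Qed.

Lemma agree_exceptP qs qs' j i : agree_except qs qs' j -> j != i -> qs' i = qs i.
Proof. by move/forallP/(_ i); rewrite eq_sym => /implyP H /H /eqP. Qed.

Definition ord_stack (Sk : seq psym) := map (fun x => x.1.1) Sk.
Definition comp_stack i (Sk : seq psym) := pmap (fun x : psym => sym_at i x.1.2) Sk.
Definition stack_comps (Sk : seq psym) := map (fun x : psym => tag x.1.2) Sk.

Fixpoint top_chain (t : option 'I_n) (Sk : seq psym) : bool :=
  if Sk is x :: Sk' then (t == Some (tag x.1.2)) && top_chain x.2 Sk' else t == None.

Definition comp_config i (C : config prod_vpa) : config (Af i) :=
  (C.1.1.1.2 i, comp_stack i C.2).

Definition represents γ (C : config prod_vpa) : Prop :=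
  let: ((qo, qs, F, t), Sk) := C in
  [/\ exists2 q0, vinit q0 & vrun kind (q0, [::]) γ ((qo, ord_stack Sk) : config Aord),
      forall k, F k = forbidden γ k,
      nest_run [::] γ = Some (stack_comps Sk),
      top_chain t Sk &
      forall i, exists2 q0, vinit q0 &
        vrun kind (q0, [::]) (proj comp i γ) (comp_config i C)].

Lemma top_comp_stack γ Sk t :
  nest_run [::] γ = Some (stack_comps Sk) -> top_chain t Sk -> top_comp kind comp γ = t.
Proof. by rewrite /top_comp => ->; case: Sk => [|x Sk] /=; [move/eqP | case/andP => /eqP]. Qed.

Lemma forbidden_upd_rcons γ (F : {ffun _ -> _}) qo S t a q0 : vinit q0 ->
  vrun kind (q0, [::]) γ ((qo, S) : config Aord) -> top_comp kind comp γ = t ->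
  (forall k, F k = forbidden γ k) -> forall k, forbidden_upd F qo t a k = forbidden (rcons γ a) k.
Proof.
move=> Hq0 Hrun Ht HF k; rewrite ffunE forbidden_rcons HF; case: eqP => // _.
by congr (_ :|: _); apply/setP => y; rewrite !inE (ord_prec Hq0 Hrun) /insertable Ht.
Qed.

Lemma prod_step_inv qo qs F t Sk a qo' qs' F' t' Sk' (C := ((qo, qs, F, t), Sk))
    (C' := ((qo', qs', F', t'), Sk')) :
  vstep kind (C : config prod_vpa) a C' -> top_chain t Sk ->
  [/\ vstep kind ((qo, ord_stack Sk) : config Aord) a (qo', ord_stack Sk'),
      a \notin F (comp a) /\ F' = forbidden_upd F qo t a,
      nest_step (stack_comps Sk) a = Some (stack_comps Sk') /\ top_chain t' Sk',
      vstep kind (comp_config (comp a) C) a (comp_config (comp a) C') &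
      forall i, comp a != i -> comp_config i C' = comp_config i C].
Proof.
rewrite {}/C {}/C' => Hs Ht; case Ka: (kind a).
- have [_ [[[go s] t0] [[<- ->] /and5P [Ho /eqP Es Hj Hag /and4P [HF /eqP -> /eqP -> /eqP ->]]]]] :=
    vstep_call_inv Ka Hs.
  split=> //; first exact: StepCall Ka Ho.
  + by rewrite /nest_step Ka /= Es eqxx.
  + by rewrite /comp_config /= -Es sym_at_tag; apply: StepCall Ka Hj.
  by move=> i; rewrite -Es => Ni; rewrite /comp_config /= sym_at_other // (agree_exceptP Hag Ni).
- case: Sk Ht Hs => [_ /(vstep_ret_bot_inv Ka) [[[[? ?] ?] ?] _] //|[[go s] t0] Sk Ht Hs].
  have [_ [<- ->] /and5P [Ho /eqP Es Hj Hag /and3P [HF /eqP -> /eqP ->]]] := vstep_ret_inv Ka Hs.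
  case/andP: Ht => _ Ht; split=> //; first exact: StepRet Ka Ho.
  + by rewrite /nest_step Ka /= Es eqxx.
  + by rewrite /comp_config /= -Es sym_at_tag; apply: StepRet Ka Hj.
  by move=> i; rewrite -Es => Ni; rewrite /comp_config /= sym_at_other // (agree_exceptP Hag Ni).
- have [_ [<- ->] /and5P [Ho Hj Hag HF /andP [/eqP -> /eqP ->]]] := vstep_int_inv Ka Hs.
  split=> //; first exact: StepInt Ka Ho.
  + by rewrite /nest_step Ka.
  + exact: StepInt Ka Hj.
  by move=> i Ni; rewrite /comp_config /= (agree_exceptP Hag Ni).
Qed.

Lemma comp_runs_rcons γ a (cf cf' : forall i, config (Af i)) :
  (forall i, exists2 q0, vinit q0 & vrun kind (q0, [::]) (proj comp i γ) (cf i)) ->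
  vstep kind (cf (comp a)) a (cf' (comp a)) -> (forall i, comp a != i -> cf' i = cf i) ->
  forall i, exists2 q0, vinit q0 & vrun kind (q0, [::]) (proj comp i (rcons γ a)) (cf' i).
Proof.
move=> Hrun Hs Hother i; rewrite proj_rcons; case: (eqVneq (comp a) i) => [<-|Ni].
  by have [q0 Hq0 Hr] := Hrun (comp a); exists q0 => //; apply: vrun_rcons Hr Hs.
by rewrite Hother.
Qed.

Lemma prod_step_sound γ C a C' : represents γ C -> vstep kind C a C' ->
  represents (rcons γ a) C' /\ a \notin forbidden γ (comp a).
Proof.
case: C C' => [[[[qo qs] F] t] Sk] [[[[qo' qs'] F'] t'] Sk'].
case=> [[q0 Hq0 Hro] HF Hnest Ht Hcomp] /prod_step_inv/(_ Ht) [Ho [HFa ->] [Hn Ht'] Hj Hother].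
split; last by rewrite -HF.
split=> //; first by exists q0 => //; apply: vrun_rcons Hro Ho.
- exact: forbidden_upd_rcons Hq0 Hro (top_comp_stack Hnest Ht) HF.
- by rewrite nest_run_rcons Hnest.
exact: (comp_runs_rcons (cf := comp_config ^~ ((qo, qs, F, t), Sk))).
Qed.

Lemma prod_run_sound C x C' : vrun kind C x C' -> forall γ, represents γ C ->
  represents (γ ++ x) C' /\
  forall γ' a δ, x = γ' ++ a :: δ -> a \notin forbidden (γ ++ γ') (comp a).
Proof.
elim=> [c|c a c' w c'' Hs _ IH] γ HC; first by rewrite cats0; split=> // [[|? ?]].
have [HC' Ha] := prod_step_sound HC Hs; have [HC'' Hw] := IH _ HC'.
split=> [|[|b γ'] a' δ /= [<-]]; first by rewrite -cat_rcons.
  by rewrite cats0.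
by move=> Ew; rewrite -cat_rcons; apply: Hw Ew.
Qed.

Lemma represents_init c : prod_init c -> represents [::] ((c, [::]) : config prod_vpa).
Proof.
case: c => [[[qo qs] F] t] /and4P [Hqo /forallP Hqs /eqP -> /eqP ->].
split=> //; first by exists qo => //; apply: RunNil.
- by move=> k; rewrite ffunE.
by move=> i; exists (qs i) => //; apply: RunNil.
Qed.

Lemma prod_step_complete qo qs F t Sk a co' cj'
    (C : config prod_vpa := ((qo, qs, F, t), Sk)) :
  top_chain t Sk -> a \notin F (comp a) -> nest_step (stack_comps Sk) a <> None ->
  vstep kind ((qo, ord_stack Sk) : config Aord) a co' ->
  vstep kind (comp_config (comp a) C) a cj' ->
  exists2 C', vstep kind C a C' & comp_config (comp a) C' = cj'.
Proof.
rewrite {}/C => Ht HF Hn Ho Hj; case Ka: (kind a).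
- have [qo' [go [_ Hgo]]] := vstep_call_inv Ka Ho.
  have [qj' [gj [-> Hgj]]] := vstep_call_inv Ka Hj.
  exists ((qo', set_state qs (comp a) qj', forbidden_upd F qo t a, Some (comp a)),
          (go, Tagged (fun k => vgam (Af k)) gj, t) :: Sk).
    apply: StepCall Ka _; apply/and5P; split=> //=; first by rewrite set_state_same.
      exact: agree_except_set_state.
    by rewrite HF !eqxx.
  by rewrite /comp_config /= set_state_same (sym_at_tag (Tagged (fun k => vgam (Af k)) gj)).
- case: Sk Ht Hn Ho Hj => [|[[go [j gj]] t0] Sk] Ht; first by rewrite /nest_step Ka.
  rewrite /nest_step Ka /=; case: eqP => // Ej _ Ho; subst j.
  rewrite /comp_config /= (sym_at_tag (Tagged (fun k => vgam (Af k)) gj)) => Hj.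
  have [qo' _ Hgo] := vstep_ret_inv Ka Ho; have [qj' -> Hgj] := vstep_ret_inv Ka Hj.
  exists ((qo', set_state qs (comp a) qj', forbidden_upd F qo t a, t0), Sk).
    apply: StepRet Ka _; apply/and5P; split=> //=; first by rewrite set_state_same.
      exact: agree_except_set_state.
    by rewrite HF !eqxx.
  by rewrite /comp_config /= set_state_same.
- have [qo' _ Hgo] := vstep_int_inv Ka Ho; have [qj' -> Hgj] := vstep_int_inv Ka Hj.
  exists ((qo', set_state qs (comp a) qj', forbidden_upd F qo t a, t), Sk).
    apply: StepInt Ka _; apply/and5P; split=> //=; first by rewrite set_state_same.
      exact: agree_except_set_state.
    by rewrite !eqxx.
  by rewrite /comp_config /= set_state_same.
Qed.

Hypothesis Aord_complete : forall (c : config Aord) a, exists c', vstep kind c a c'.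

Lemma prod_run_complete x γ (C : config prod_vpa) : represents γ C ->
  nest_run [::] (γ ++ x) <> None ->
  (forall γ' a δ, x = γ' ++ a :: δ -> a \notin forbidden (γ ++ γ') (comp a)) ->
  (forall i, exists2 c, vrun kind (comp_config i C) (proj comp i x) c & vfinal c.1) ->
  exists2 C', vrun kind C x C' & prod_final C'.1.
Proof.
elim: x γ C => [|a x IH] γ C HC Hnest Havoid Hacc.
  exists C; first exact: RunNil.
  case: C {HC} Hacc => [[[[qo qs] F] t] Sk] Hacc; apply/forallP => i.
  by have [c /vrun_nil_inv -> Hf] := Hacc i.
case: C HC Hacc => [[[[qo qs] F] t] Sk] HC Hacc; have [[q0 Hq0 Hro] HF Hn Ht _] := HC.
have Ha : a \notin F (comp a) by rewrite HF -[γ]cats0; apply: (Havoid [::] a x).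
have Hna : nest_step (stack_comps Sk) a <> None.
  by move: Hnest; rewrite nest_run_cat Hn /=; case: nest_step.
have [co' Ho] := Aord_complete (qo, ord_stack Sk) a.
have [c] := Hacc (comp a); rewrite proj_cons eqxx => /vrun_cons_inv [cj Hj Hr] Hf.
have [C' Hs HC'j] := prod_step_complete Ht Ha Hna Ho Hj.
have [HC' _] := prod_step_sound HC Hs.
have [|γ' b δ Ex|i|C'' Hr' Hf'] := IH (rcons γ a) C' HC'; first by rewrite cat_rcons.
- by rewrite cat_rcons; apply: (Havoid (a :: γ')); rewrite Ex.
- case: (eqVneq (comp a) i) => [<-|Ni]; first by exists c; rewrite ?HC'j.
  case: C' Hs {HC' HC'j} => [[[[? ?] ?] ?] ?] Hs; have [_ _ _ _ ->] := prod_step_inv Hs Ht => //.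
  by have := Hacc i; rewrite proj_cons (negbTE Ni).
by exists C'' => //; apply: RunCons Hs Hr'.
Qed.

Variable P : 'I_n -> seq Sigma -> Prop.
Hypothesis P_well_matched : forall i w, P i w -> well_matched kind w.
Hypothesis Af_lang : forall i w, P i w <-> vaccepts kind (Af i) w.
Hypothesis prec_irr : forall w a, ~~ prec w a a.
Hypothesis Aord_init : exists q0 : vst Aord, vinit q0.

Lemma prod_vpa_lang w : red comp prec (bowtie kind comp P) w <-> vaccepts kind prod_vpa w.
Proof.
rewrite red_bowtieP //; split=> [[Lw Hw]|[c0 [[[[[qo qs] F] t] Sk] [Hinit [Hr Hf]]]]].
  have /(bowtieP comp P_well_matched) [Hsh Hnest] := Lw.
  have [qs Hqs] := fin_all_exists (fun i => (Af_lang i _).1 (Hsh i)).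
  have [qo Hqo] := Aord_init.
  pose c0 : pstate := (qo, finfun qs, [ffun=> set0], None).
  have Hinit : prod_init c0.
    by apply/and4P; split=> //; apply/forallP => i; rewrite ffunE; case: (Hqs i) => c [].
  have [|C Hr Hf] := prod_run_complete (represents_init Hinit) Hnest Hw.
    by move=> i; have [c [_ [Hr Hf]]] := Hqs i; exists c; rewrite /comp_config /= ?ffunE.
  by exists c0, C.
have [[_ _ Hn _ Hcomp] Hw] := prod_run_sound Hr (represents_init Hinit).
split=> //; apply/(bowtieP comp P_well_matched); split=> [i|]; last by rewrite Hn.
apply/Af_lang; have [q0 Hq0 Hri] := Hcomp i.
by exists q0, (comp_config i ((qo, qs, F, t), Sk)); do 2!split=> //; apply: (forallP Hf).
Qed.

End Product.

Theorem theorem4p4 (Sigma : finType) (kind : Sigma -> vkind) (n : nat)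
  (comp : Sigma -> 'I_n) (prec : seq Sigma -> rel Sigma)
  (P : 'I_n -> seq Sigma -> Prop) :
  vp_contextual_order kind prec ->
  (forall i w, P i w -> all (fun a => comp a == i) w) ->
  (forall i w, P i w -> well_matched kind w) ->
  (forall i, is_vpl kind (P i)) ->
  is_vpl kind (red comp prec (bowtie kind comp P)).
Proof.
(* [P i] is only ever applied to projections onto component [i]. *)
move=> [Hco [Aord [ord [_ [[Hinit Hcompl] [_ Hord]]]]]] _ Hwm HP.
have [Af HAf] := fin_all_exists HP.
exists (prod_vpa kind comp ord Af) => w.
apply: prod_vpa_lang => //; last by move=> v a; case: (Hco v).
Qed.
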